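(* Let $\mathcal O_M\subseteq\mathcal O_L$ be a quadratic extension of Dedekind domains with fraction fields $M\subseteq L$, $L/M$ Galois with $\operatorname{Gal}(L/M)=\langle\sigma\rangle\cong{\mathbf Z}/2{\mathbf Z}$. Define $\mathrm{ATr}:\mathcal O_L\to\mathcal O_L$ by $\mathrm{ATr}(x)=x-x^\sigma$ and $\mathscr A=\mathrm{ATr}(\mathcal O_L)$. Then for every nonzero ideal $I\subseteq\mathcal O_M$, \[ \mathcal O_M+I\mathcal O_L=\{x\in\mathcal O_L\mid \mathrm{ATr}(x)\in I\mathscr A\}. \] Moreover $\mathscr A$ is a projective $\mathcal O_M$-module of rank $1$.
   Context: ''Quadratic extension of Dedekind domains'' means $\mathcal O_L$ is a Dedekind domain containing $\mathcal O_M$, finitely generated as an $\mathcal O_M$-module, with $[L:M]=2$. *)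

From HB Require Import structures.
From mathcomp Require Import all_boot all_order all_algebra all_field.
Set Implicit Arguments. Unset Strict Implicit. Unset Printing Implicit Defensive.
Import GRing.Theory.
Local Open Scope ring_scope.

Section Defs.
Variable K : fieldType.
Implicit Types (S J P : K -> Prop).

Definition is_subring S : Prop :=
  [/\ S 0, S 1, (forall x y, S x -> S y -> S (x - y)) &
      (forall x y, S x -> S y -> S (x * y))].

Definition is_ideal S J : Prop :=
  [/\ (forall x, J x -> S x), J 0,
      (forall x y, J x -> J y -> J (x + y)) &
      (forall r x, S r -> J x -> J (r * x))].

Definition fg_ideal S J : Prop :=
  exists (n : nat) (g : 'I_n -> K), (forall k, J (g k)) /\
    forall x, J x <-> exists c : 'I_n -> K, (forall k, S (c k)) /\
                        x = \sum_(k < n) c k * g k.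

Definition is_prime_ideal S P : Prop :=
  [/\ is_ideal S P, ~ P 1 &
      forall a b, S a -> S b -> P (a * b) -> P a \/ P b].

Definition is_maximal_ideal S P : Prop :=
  is_ideal S P /\ ~ P 1 /\
  forall J, is_ideal S J -> (forall x, P x -> J x) -> J 1 \/ (forall x, J x -> P x).

Definition in_frac_field S : K -> Prop :=
  fun x => exists a b, S a /\ S b /\ b != 0 /\ x = a / b.

Definition integral_over S (x : K) : Prop :=
  exists p : {poly K}, p \is monic /\ (forall i, S p`_i) /\ root p x.

(* Dedekind domain: Noetherian, integrally closed in its fraction field,
   every nonzero prime ideal is maximal. (A subring of a field is a domain.) *)
Definition is_dedekind S : Prop :=
  [/\ is_subring S,
      (forall J, is_ideal S J -> fg_ideal S J),
      (forall x, in_frac_field S x -> integral_over S x -> S x) &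
      (forall P, is_prime_ideal S P -> (exists x, P x /\ x != 0) ->
                 is_maximal_ideal S P)].

End Defs.

Section Ext.
Variables (M : fieldType) (L : fieldExtType M).

Definition prod_mod (I : M -> Prop) (B : L -> Prop) : L -> Prop :=
  fun y => exists (n : nat) (i : 'I_n -> M) (b : 'I_n -> L),
    (forall k, I (i k)) /\ (forall k, B (b k)) /\ y = \sum_(k < n) i k *: b k.

(* A (a subset of L, closed under O_M-operations) is a finitely generated
   projective O_M-module: a direct summand of some O_M^n, i.e. there are
   O_M-linear maps f : A -> O_M^n and g : O_M^n -> A with g \o f = id on A. *)
Definition fg_projective (OM : M -> Prop) (A : L -> Prop) : Prop :=
  exists (n : nat) (f : L -> 'I_n -> M) (g : ('I_n -> M) -> L),
  (forall x, A x -> forall k, OM (f x k)) /\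
  (forall v, (forall k, OM (v k)) -> A (g v)) /\
  (forall x y, A x -> A y -> f (x + y) = (fun k => f x k + f y k)) /\
  (forall c x, OM c -> A x -> f (c *: x) = (fun k => c * f x k)) /\
  (forall v w, (forall k, OM (v k)) -> (forall k, OM (w k)) ->
     g (fun k => v k + w k) = g v + g w) /\
  (forall c v, OM c -> (forall k, OM (v k)) ->
     g (fun k => c * v k) = c *: g v) /\
  (forall x, A x -> g (f x) = x).

(* rank 1 (for a torsion-free module A inside L): M (x)_{O_M} A = M.A is a
   one-dimensional M-vector space. *)
Definition rank_one (A : L -> Prop) : Prop :=
  exists a, A a /\ a != 0 /\ forall x, A x -> exists c : M, x = c *: a.

End Ext.

(* The anti-trace [ATr] is [M]-linear with kernel [M], and [L = M + M t] for any [t]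
   moved by [sigma], so [ATr] maps [L] onto the line [M ATr(t)].  Hence if [x] is in
   [O_L] and [ATr x = ATr y] with [y \in I O_L], then [x - y] lies in [M \cap O_L],
   which is [O_M] because [O_L] is a finite [O_M]-module and [O_M] is integrally
   closed.  The module [ATr(O_L)] is a finitely generated [O_M]-submodule of that
   line, i.e. a nonzero fractional ideal times [ATr(t)].  Nonzero ideals of a
   Dedekind domain are invertible (Noetherian induction, using that a maximal ideal
   [p] admits [x \notin O_M] with [x p <= O_M]), and an invertible ideal is
   projective by the dual basis lemma. *)

From HB Require Import structures.
From mathcomp Require Import all_boot all_order all_algebra all_field.
From mathcomp Require Import ring.
From Stdlib Require Import Classical ClassicalEpsilon FunctionalExtensionality.
From Stdlib Require List.
Set Implicit Arguments. Unset Strict Implicit. Unset Printing Implicit Defensive.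
Import GRing.Theory.
Local Open Scope ring_scope.

Section SubringsOfAField.
Variable K : fieldType.
Implicit Types (A B J : K -> Prop) (x : K).

Definition included A B := forall x, A x -> B x.
Definition nonzero A := exists x, A x /\ x != 0.
Definition set_add A B y := exists a b, A a /\ B b /\ y = a + b.
Definition set_scale x A y := exists a, A a /\ y = x * a.

(* [included (prod_elt ps) J] says that [J] contains the product of the ideals [ps]. *)
Fixpoint prod_elt (ps : seq (K -> Prop)) (u : K) : Prop :=
  if ps is p :: ps' then exists x y, p x /\ prod_elt ps' y /\ u = x * y else u = 1.

Lemma included_set_addl A B : B 0 -> included A (set_add A B).
Proof. by move=> B0 a Aa; exists a, 0; rewrite addr0. Qed.

Lemma prod_elt_cat s t u :
  prod_elt (s ++ t) u <-> exists v w, prod_elt s v /\ prod_elt t w /\ u = v * w.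
Proof.
elim: s u => [|p s IH] u /=.
  by split=> [tu | [_ [w [-> [tw ->]]]]]; [exists 1, u; rewrite mul1r | rewrite mul1r].
split=> [[x [y [px [/IH [v [w [sv [tw ->]]]] ->]]]] | [_ [w [[x [y [px [sy ->]]]] [tw ->]]]]].
  by exists (x * v), w; split; [exists x, v | rewrite mulrA].
by exists x, (y * w); split=> //; split; [apply/IH; exists y, w | rewrite mulrA].
Qed.

Lemma prod_elt_insert s1 s2 p u y :
  prod_elt (s1 ++ s2) u -> p y -> prod_elt (s1 ++ p :: s2) (y * u).
Proof.
move=> /prod_elt_cat [v [w [sv [tw ->]]]] py; apply/prod_elt_cat.
by exists v, (y * w); split=> //; split; [exists y, w | rewrite mulrCA].
Qed.

Variable R : K -> Prop.

Definition span_ideal n (h : 'I_n -> K) c :=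
  exists2 e : 'I_n -> K, forall k, R (e k) & c = \sum_k e k * h k.

(* [J^-1 J = R], witnessed by [\sum_i u_i g_i = 1] with [g_i \in J] and [u_i J <= R]. *)
Definition dual_pairs J (s : seq (K * K)) :=
  forall t, t \in s -> J t.2 /\ forall y, J y -> R (t.1 * y).

Definition invertible_ideal J :=
  exists2 s, dual_pairs J s & \sum_(t <- s) t.1 * t.2 = 1.

Hypothesis HR : is_subring R.

Lemma subring0 : R 0. Proof. by case: HR. Qed.
Lemma subring1 : R 1. Proof. by case: HR. Qed.
Lemma subringB x y : R x -> R y -> R (x - y). Proof. by case: HR => _ _ + _; apply. Qed.
Lemma subringM x y : R x -> R y -> R (x * y). Proof. by case: HR => _ _ _; apply. Qed.
Lemma subringN x : R x -> R (- x).
Proof. by rewrite -sub0r; apply/subringB/subring0. Qed.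
Lemma subringD x y : R x -> R y -> R (x + y).
Proof. by move=> Rx /subringN Ry; rewrite -[y]opprK; apply: subringB. Qed.
Lemma subringX x n : R x -> R (x ^+ n).
Proof.
by move=> Rx; elim: n => [|n IH]; rewrite ?expr0 ?exprS; [exact: subring1 | exact: subringM].
Qed.
Lemma subring_sum (I : Type) (r : seq I) (P : pred I) (F : I -> K) :
  (forall i, P i -> R (F i)) -> R (\sum_(i <- r | P i) F i).
Proof. by move=> RF; apply: big_ind => //; [exact: subring0 | exact: subringD]. Qed.
Lemma subring_prod (I : Type) (r : seq I) (P : pred I) (F : I -> K) :
  (forall i, P i -> R (F i)) -> R (\prod_(i <- r | P i) F i).
Proof. by move=> RF; apply: big_ind => //; [exact: subring1 | exact: subringM]. Qed.

Section Ideal.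
Variable J : K -> Prop.
Hypothesis HJ : is_ideal R J.

Lemma ideal_subring x : J x -> R x. Proof. by case: HJ => + _ _ _; apply. Qed.
Lemma ideal0 : J 0. Proof. by case: HJ. Qed.
Lemma idealD x y : J x -> J y -> J (x + y). Proof. by case: HJ => _ _ + _; apply. Qed.
Lemma idealM r x : R r -> J x -> J (r * x). Proof. by case: HJ => _ _ _; apply. Qed.
Lemma ideal_sum (I : Type) (r : seq I) (P : pred I) (F : I -> K) :
  (forall i, P i -> J (F i)) -> J (\sum_(i <- r | P i) F i).
Proof. by move=> JF; apply: big_ind => //; [exact: ideal0 | exact: idealD]. Qed.

End Ideal.

Lemma subring_ideal : is_ideal R R.
Proof.
split=> // [|x y Rx Ry|]; [exact: subring0 | exact: subringD | exact: subringM].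
Qed.

Lemma set_add_ideal A B : is_ideal R A -> is_ideal R B -> is_ideal R (set_add A B).
Proof.
move=> HA HB; split.
- by move=> _ [a [b [Aa [Bb ->]]]]; apply: subringD (ideal_subring HA Aa) (ideal_subring HB Bb).
- by exists 0, 0; rewrite addr0; split; [exact: ideal0 HA | split; [exact: ideal0 HB |]].
- move=> _ _ [a [b [Aa [Bb ->]]]] [a' [b' [Aa' [Bb' ->]]]]; exists (a + a'), (b + b').
  by rewrite addrACA; split; [exact: idealD | split; [exact: idealD |]].
- move=> r _ Rr [a [b [Aa [Bb ->]]]]; exists (r * a), (r * b).
  by rewrite mulrDr; split; [exact: idealM | split; [exact: idealM |]].
Qed.

Lemma set_scale_ideal x A :
  is_ideal R A -> (forall a, A a -> R (x * a)) -> is_ideal R (set_scale x A).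
Proof.
move=> HA RxA; split.
- by move=> _ [a [Aa ->]]; exact: RxA.
- by exists 0; rewrite mulr0; split; first exact: ideal0 HA.
- move=> _ _ [a [Aa ->]] [b [Ab ->]]; exists (a + b).
  by rewrite mulrDr; split; first exact: idealD.
- move=> r _ Rr [a [Aa ->]]; exists (r * a).
  by rewrite mulrCA; split; first exact: idealM.
Qed.

Lemma principal_ideal a : R a -> is_ideal R (set_scale a R).
Proof. by move=> Ra; apply: set_scale_ideal subring_ideal _ => r; apply: subringM. Qed.

Lemma span_ideal_ideal n (h : 'I_n -> K) : (forall k, R (h k)) -> is_ideal R (span_ideal h).
Proof.
move=> Rh; split.
- by move=> _ [e Re ->]; apply: subring_sum => k _; apply: subringM.
- by exists (fun=> 0); [move=> _; exact: subring0 | rewrite big1 // => k _; rewrite mul0r].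
- move=> _ _ [e Re ->] [e' Re' ->]; exists (fun k => e k + e' k).
    by move=> k; apply: subringD.
  by rewrite -big_split; apply: eq_bigr => k _; rewrite mulrDl.
- move=> r _ Rr [e Re ->]; exists (fun k => r * e k).
    by move=> k; apply: subringM.
  by rewrite mulr_sumr; apply: eq_bigr => k _; rewrite mulrA.
Qed.

Lemma prod_elt_subring ps u : List.Forall (is_ideal R) ps -> prod_elt ps u -> R u.
Proof.
elim: ps u => [|p ps IH] u /=; first by move=> _ ->; exact: subring1.
move=> /List.Forall_cons_iff [Hp Hps] [x [y [px [psy ->]]]].
exact: subringM (ideal_subring Hp px) (IH _ Hps psy).
Qed.

Lemma maximal_ideal_prime p : is_maximal_ideal R p -> is_prime_ideal R p.
Proof.
move=> [Hp [np1 maxp]]; split=> // a b Ra Rb pab.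
apply: NNPP => /not_or_and [npa npb].
have Hpa := set_add_ideal Hp (principal_ideal Ra).
case: (maxp _ Hpa (included_set_addl (ideal0 (principal_ideal Ra)))).
  move=> [z [_ [pz [[r [Rr ->]] E]]]]; apply: npb.
  have -> : b = b * z + r * (a * b) by rewrite -[b in LHS]mulr1 E; ring.
  exact: idealD Hp _ _ (idealM Hp Rb pz) (idealM Hp Rr pab).
move=> sub; apply: npa; apply: sub; exists 0, a; rewrite add0r; split; first exact: ideal0 Hp.
by split=> //; exists 1; rewrite mulr1; split; first exact: subring1.
Qed.

Lemma prime_contains_factor q ps : is_prime_ideal R q ->
  List.Forall (is_ideal R) ps -> included (prod_elt ps) q ->
  exists s1 p s2, ps = s1 ++ p :: s2 /\ included p q.
Proof.
move=> [Hq nq1 primeq]; elim: ps => [_ sub | p ps IH /List.Forall_cons_iff [Hp Hps] sub].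
  by case: nq1; apply: sub.
case: (classic (included p q)) => [pq | npq]; first by exists [::], p, ps.
have [x [px nqx]] : exists x, p x /\ ~ q x.
  by apply: NNPP => none; apply: npq => x px; apply: NNPP => nqx; apply: none; exists x.
have [|s1 [p' [s2 [-> p'q]]]] := IH Hps; last by exists (p :: s1), p', s2.
move=> y psy; have qxy : q (x * y) by apply: sub; exists x, y.
by case: (primeq _ _ (ideal_subring Hp px) (prod_elt_subring Hps psy) qxy).
Qed.

Lemma invertible_ideal_of_add_scale J x : J 0 ->
  invertible_ideal (set_add J (set_scale x J)) -> invertible_ideal J.
Proof.
move=> J0 [s dual_s sum_s].
suff [t dual_t sum_t] : exists2 t, dual_pairs J t &
    \sum_(e <- t) e.1 * e.2 = \sum_(e <- s) e.1 * e.2 by exists t; rewrite // sum_t.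
elim: s dual_s {sum_s} => [|[u g] s IH] dual_s; first by exists [::].
have [|t dual_t sum_t] := IH; first by move=> t ts; apply: dual_s; rewrite inE ts orbT.
have /= [[z [_ [Jz [[w [Jw ->]] ->]]]] uR] := dual_s (u, g) (mem_head _ _).
exists [:: (u, z), (u * x, w) & t].
  move=> e; rewrite !inE => /orP [/eqP -> | /orP [/eqP -> | /dual_t //]] /=.
    split=> // y Jy; apply: uR; exists y, 0; rewrite addr0.
    by split=> //; split=> //; exists 0; rewrite mulr0.
  split=> // y Jy; rewrite -mulrA; apply: uR.
  by exists 0, (x * y); rewrite add0r; split=> //; split=> //; exists y.
by rewrite !big_cons sum_t /=; ring.
Qed.

Section Noetherian.
Hypothesis Hnoeth : forall J, is_ideal R J -> fg_ideal R J.

Lemma noetherian_chain_stationary (C : nat -> K -> Prop) :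
  (forall n, is_ideal R (C n)) -> (forall n, included (C n) (C n.+1)) ->
  exists N, included (C N.+1) (C N).
Proof.
move=> HC incC.
have mono m n : (m <= n)%N -> included (C m) (C n).
  move=> /subnK <-; elim: (n - m)%N => [|k IH] x Cx; rewrite ?add0n ?addSn //.
  exact/incC/IH.
pose U x := exists n, C n x.
have UI : is_ideal R U.
  split.
  - by move=> x [n Cx]; exact: ideal_subring (HC n) _ Cx.
  - by exists 0%N; exact: ideal0 (HC 0%N).
  - move=> x y [m Cx] [n Cy]; exists (maxn m n).
    exact: idealD (HC _) _ _ (mono _ _ (leq_maxl m n) _ Cx) (mono _ _ (leq_maxr m n) _ Cy).
  - by move=> r x Rr [n Cx]; exists n; exact: idealM (HC n) _ _ Rr Cx.
have [k [g [Ug Ugen]]] := Hnoeth UI.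
have [N_ CN] := fin_all_exists Ug.
exists (\max_i N_ i)%N => x Cx.
have /Ugen [c [Rc ->]] : U x by exists (\max_i N_ i).+1%N.
apply: (ideal_sum (HC _)) => i _; apply: (idealM (HC _) (Rc i)).
exact: mono (leq_bigmax i) _ (CN i).
Qed.

Lemma noetherian_ind (P : (K -> Prop) -> Prop) :
  (forall J, is_ideal R J ->
     (forall J', is_ideal R J' -> included J J' -> ~ included J' J -> P J') -> P J) ->
  forall J, is_ideal R J -> P J.
Proof.
move=> IH J0 HJ0; apply: NNPP => nPJ0.
pose bad := {J | is_ideal R J /\ ~ P J}.
have next (B : bad) :
    {B' : bad | included (sval B) (sval B') /\ ~ included (sval B') (sval B)}.
  apply: constructive_indefinite_description.
  case: B => J [HJ nPJ] /=; apply: NNPP => none; apply: nPJ; apply: IH => // J' HJ' JJ' nJ'J.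
  by apply: NNPP => nPJ'; apply: none; exists (exist _ J' (conj HJ' nPJ')).
pose fix chain n : bad :=
  if n is n'.+1 then sval (next (chain n')) else exist _ J0 (conj HJ0 nPJ0).
have [N stuck] := @noetherian_chain_stationary (fun n => sval (chain n))
  (fun n => (svalP (chain n)).1) (fun n => (svalP (next (chain n))).1).
exact: (svalP (next (chain N))).2 stuck.
Qed.

Lemma proper_ideal_sub_maximal J : is_ideal R J -> ~ J 1 ->
  exists2 p, is_maximal_ideal R p & included J p.
Proof.
move: J; apply: noetherian_ind => J HJ IH nJ1.
case: (classic (is_maximal_ideal R J)) => [maxJ | nmaxJ]; first by exists J.
have [J' [HJ' [JJ' [nJ'J nJ'1]]]] :
    exists J', is_ideal R J' /\ included J J' /\ ~ included J' J /\ ~ J' 1.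
  apply: NNPP => none; apply: nmaxJ; split=> //; split=> // J' HJ' JJ'.
  case: (classic (J' 1)) => [|nJ'1]; [by left | right].
  by apply: NNPP => nJ'J; apply: none; exists J'.
have [p maxp J'p] := IH J' HJ' JJ' nJ'J nJ'1.
by exists p => // x /JJ'/J'p.
Qed.

Section Dedekind.
Hypothesis Hic : forall x, in_frac_field R x -> integral_over R x -> R x.
Hypothesis Hff : forall x, in_frac_field R x.
Hypothesis Hdim : forall P, is_prime_ideal R P -> (exists x, P x /\ x != 0) ->
  is_maximal_ideal R P.

Lemma common_denominator n (g : 'I_n -> K) :
  exists d, [/\ d != 0, R d & forall k, R (d * g k)].
Proof.
have /fin_all_exists [q Hq] : forall k, exists b, [/\ b != 0, R b & R (b * g k)].
  move=> k; have [a [b [Ra [Rb [b0 ->]]]]] := Hff (g k).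
  by exists b; split=> //; rewrite mulrC divfK.
exists (\prod_k q k); split.
- by apply/prodf_neq0 => k _; case: (Hq k).
- by apply: subring_prod => k _; case: (Hq k).
- move=> k; rewrite (bigD1 k) //= mulrAC; case: (Hq k) => _ _ Rqg.
  by apply: subringM Rqg _; apply: subring_prod => j _; case: (Hq j).
Qed.

Lemma scaled_poly_values_ideal (x d : K) : (forall n, R (d * x ^+ n)) ->
  is_ideal R (fun y => exists2 p : {poly K}, forall i, R p`_i & y = d * p.[x]).
Proof.
move=> Rdx; split.
- move=> _ [p Rp ->]; rewrite horner_coef mulr_sumr; apply: subring_sum => i _.
  by rewrite mulrCA; apply: subringM.
- by exists 0; [move=> i; rewrite coef0; exact: subring0 | rewrite horner0 mulr0].
- move=> _ _ [p Rp ->] [q Rq ->]; exists (p + q); last by rewrite hornerD mulrDr.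
  by move=> i; rewrite coefD; apply: subringD.
- move=> r _ Rr [p Rp ->]; exists (r *: p); last by rewrite hornerZ mulrCA.
  by move=> i; rewrite coefZ; apply: subringM.
Qed.

(* [d R[x]] is an ideal of [R], hence finitely generated, so some [x ^+ N] is an
   [R]-combination of lower powers of [x]. *)
Lemma almost_integral_mem (x d : K) : d != 0 -> (forall n, R (d * x ^+ n)) -> R x.
Proof.
move=> d0 Rdx.
have [n [g [Jg Jgen]]] := Hnoeth (scaled_poly_values_ideal Rdx).
have /fin_all_exists [p Hp] : forall k, exists p : {poly K},
    (forall i, R p`_i) /\ g k = d * p.[x].
  by move=> k; case: (Jg k) => p; exists p.
pose N := (\max_k size (p k))%N.
have /Jgen [c [Rc EN]] : exists2 p : {poly K}, forall i, R p`_i & d * x ^+ N = d * p.[x].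
  exists 'X^N; last by rewrite hornerXn.
  by move=> i; rewrite coefXn; case: (i == N); [exact: subring1 | exact: subring0].
pose q := \sum_k c k *: p k.
have xNq : x ^+ N = q.[x].
  apply: (mulfI d0); rewrite EN /q horner_sum mulr_sumr; apply: eq_bigr => k _.
  by case: (Hp k) => _ ->; rewrite hornerZ mulrCA.
have size_q : (size q <= N)%N.
  apply: leq_trans (size_sum _ _ _) _; apply/bigmax_leqP => k _.
  exact: leq_trans (size_scale_leq _ _) (leq_bigmax k).
apply: Hic; first exact: Hff.
exists ('X^N - q); split; [|split].
- by rewrite monicE lead_coefDl ?lead_coefXn // size_polyXn size_polyN ltnS.
- move=> i; rewrite coefB coefXn; apply: subringB.
    by case: (i == N); [exact: subring1 | exact: subring0].
  rewrite /q coef_sum; apply: subring_sum => k _; rewrite coefZ.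
  by apply: subringM (Rc k) _; case: (Hp k).
- by rewrite /root hornerD hornerN hornerXn -xNq subrr.
Qed.

Lemma stabilizer_mem J x : is_ideal R J -> nonzero J ->
  (forall y, J y -> J (x * y)) -> R x.
Proof.
move=> HJ [d [Jd d0]] xJ; apply: (almost_integral_mem d0) => n.
rewrite mulrC; apply: (ideal_subring HJ).
by elim: n => [|n IH]; rewrite ?expr0 ?mul1r // exprS -mulrA; exact: xJ.
Qed.

Lemma nonzero_ideal_contains_prod J : is_ideal R J -> nonzero J ->
  exists2 ps, List.Forall (is_maximal_ideal R) ps & included (prod_elt ps) J.
Proof.
move: J; apply: noetherian_ind => J HJ IH nzJ.
case: (classic (J 1)) => [J1 | nJ1]; first by exists [::] => // _ ->.
case: (classic (is_prime_ideal R J)) => [primeJ | nprimeJ].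
  exists [:: J]; first by constructor; [exact: Hdim | constructor].
  by move=> _ [x [_ [Jx [-> ->]]]]; rewrite mulr1.
have [b1 [b2 [Rb1 Rb2 Jb nJb1 nJb2]]] :
    exists b1 b2, [/\ R b1, R b2, J (b1 * b2), ~ J b1 & ~ J b2].
  apply: NNPP => none; apply: nprimeJ; split=> // x y Rx Ry Jxy.
  by apply: NNPP => /not_or_and [nJx nJy]; apply: none; exists x, y.
have enlarge b : R b -> ~ J b -> exists2 ps, List.Forall (is_maximal_ideal R) ps &
    included (prod_elt ps) (set_add J (set_scale b R)).
  move=> Rb nJb; have Hb := principal_ideal Rb.
  apply: IH (set_add_ideal HJ Hb) (included_set_addl (ideal0 Hb)) _ _.
    move=> sub; apply: nJb; apply: sub; exists 0, b; rewrite add0r.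
    by split; [exact: ideal0 HJ | split=> //; exists 1; rewrite mulr1; split=> //; exact: subring1].
  by case: nzJ => x [Jx x0]; exists x; split=> //; exact: included_set_addl (ideal0 Hb) _ Jx.
have [ps1 max1 sub1] := enlarge _ Rb1 nJb1.
have [ps2 max2 sub2] := enlarge _ Rb2 nJb2.
exists (ps1 ++ ps2); first exact/List.Forall_app.
move=> _ /prod_elt_cat [_ [_ [/sub1 [z1 [_ [Jz1 [[r1 [Rr1 ->]] ->]]]]
  [/sub2 [z2 [_ [Jz2 [[r2 [Rr2 ->]] ->]]]] ->]]]].
have Rw : R (z1 + b1 * r1) by apply: subringD (ideal_subring HJ Jz1) (subringM Rb1 Rr1).
have -> : (z1 + b1 * r1) * (z2 + b2 * r2) =
    (z1 + b1 * r1) * z2 + (b2 * r2) * z1 + (r1 * r2) * (b1 * b2) by ring.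
apply: (idealD HJ _ (idealM HJ (subringM Rr1 Rr2) Jb)).
exact: (idealD HJ (idealM HJ Rw Jz2) (idealM HJ (subringM Rb2 Rr2) Jz1)).
Qed.

(* Take [0 != a \in p] and a shortest product of maximal ideals inside [aR]; one
   factor is [p], and an element [u] of the product of the others outside [aR]
   gives [x = u / a]. *)
Lemma maximal_ideal_inverse_nontrivial p : is_maximal_ideal R p -> nonzero p ->
  exists x, ~ R x /\ forall y, p y -> R (x * y).
Proof.
move=> maxp [a [pa a0]].
have Ra := ideal_subring maxp.1 pa.
have aR_p : included (set_scale a R) p.
  by move=> _ [r [Rr ->]]; rewrite mulrC; exact: (idealM maxp.1 Rr pa).
have aR_nz : nonzero (set_scale a R).
  by exists a; split=> //; exists 1; rewrite mulr1; split=> //; exact: subring1.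
have [ps maxps sub_a] := nonzero_ideal_contains_prod (principal_ideal Ra) aR_nz.
have [n] := ubnP (size ps); elim: n ps maxps sub_a => // n IH ps maxps sub_a size_ps.
have idps := List.Forall_impl _ (fun q (maxq : is_maximal_ideal R q) => maxq.1) maxps.
have [s1 [p' [s2 [Eps p'p]]]] := prime_contains_factor (maximal_ideal_prime maxp) idps
  (fun u pu => aR_p _ (sub_a u pu)).
move: maxps; rewrite Eps => /List.Forall_app [max1 /List.Forall_cons_iff [maxp' max2]].
have pp' : included p p' by case: (maxp'.2.2 p maxp.1 p'p) => // p1; case: maxp.2.1.
case: (classic (included (prod_elt (s1 ++ s2)) (set_scale a R))) => [sub12 | nsub12].
  apply: (IH (s1 ++ s2)) => //; first exact/List.Forall_app.
  by rewrite size_cat; move: size_ps; rewrite Eps size_cat /= addnS ltnS.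
have [u [pu nu]] : exists u, prod_elt (s1 ++ s2) u /\ ~ set_scale a R u.
  by apply: NNPP => none; apply: nsub12 => u pu; apply: NNPP => nu; apply: none; exists u.
exists (u / a); split.
  by move=> Rx; apply: nu; exists (u / a); rewrite mulrCA mulfV ?mulr1.
move=> y py.
have [r [Rr Er]] : set_scale a R (y * u).
  by apply: sub_a; rewrite Eps; exact: prod_elt_insert pu (pp' _ py).
by rewrite mulrAC [u * y]mulrC Er mulrAC mulfV // mul1r.
Qed.

(* Noetherian induction: for a maximal counterexample [J], the ideal [J + xJ]
   with [x] from [maximal_ideal_inverse_nontrivial] is strictly larger, since
   [xJ <= J] would make [x] integral. *)
Lemma nonzero_ideal_invertible J : is_ideal R J -> nonzero J -> invertible_ideal J.
Proof.
move: J; apply: noetherian_ind => J HJ IH nzJ.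
case: (classic (J 1)) => [J1 | nJ1].
  exists [:: (1, 1)]; last by rewrite big_seq1 mulr1.
  by move=> t; rewrite inE => /eqP -> /=; split=> // y /(ideal_subring HJ); rewrite mul1r.
have [p maxp Jp] := proper_ideal_sub_maximal HJ nJ1.
have nzp : nonzero p by case: nzJ => y [Jy y0]; exists y; split=> //; exact: Jp.
have [x [nRx xp]] := maximal_ideal_inverse_nontrivial maxp nzp.
have HxJ := set_scale_ideal HJ (fun y Jy => xp y (Jp y Jy)).
apply: invertible_ideal_of_add_scale (ideal0 HJ) _.
apply: IH (set_add_ideal HJ HxJ) (included_set_addl (ideal0 HxJ)) _ _.
  move=> sub; apply: nRx; apply: (stabilizer_mem HJ nzJ) => y Jy; apply: sub.
  by exists 0, (x * y); rewrite add0r; split; [exact: ideal0 HJ | split=> //; exists y].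
by case: nzJ => y [Jy y0]; exists y; split=> //; exact: included_set_addl (ideal0 HxJ) _ Jy.
Qed.

End Dedekind.
End Noetherian.
End SubringsOfAField.

Lemma exists_coordinate (F : fieldType) (V : vectType F) (v : V) : v != 0 ->
  exists phi : V -> F, [/\ {morph phi : x y / x + y},
    forall a x, phi (a *: x) = a * phi x & phi v = 1].
Proof.
move=> v0; pose X := vbasis (fullv : {vspace V}).
case: (pickP (fun i => coord X i v != 0)) => [i /= ci | all0]; last first.
  case/negP: v0; apply/eqP; rewrite (coord_vbasis (memvf v)) big1 // => i _.
  by move/negbFE/eqP: (all0 i) ->; rewrite scale0r.
exists (fun x => (coord X i v)^-1 * coord X i x); split.
- by move=> x y; rewrite linearD mulrDr.
- by move=> a x; rewrite linearZ mulrCA.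
- by rewrite mulVf.
Qed.

Section OverADedekindDomain.
Variables (M : fieldType) (L : fieldExtType M) (OM : M -> Prop).
Hypothesis HOM : is_dedekind OM.
Hypothesis HMf : forall x, in_frac_field OM x.

Lemma scalar_mem_of_fg_module n (b : 'I_n -> L) (OL : L -> Prop) (c : M) :
  is_subring OL ->
  (forall x, OL x -> exists e : 'I_n -> M, (forall k, OM (e k)) /\ x = \sum_k e k *: b k) ->
  OL c%:A -> OM c.
Proof.
have [HMs HMn HMic _] := HOM.
move=> HLs OLspan OLc.
have [phi [phiD phiZ phi1]] := exists_coordinate (oner_neq0 L).
have phi0 : phi 0 = 0 by have := phiZ 0 0; rewrite scale0r mul0r.
have [d [d0 OMd OMdphi]] := common_denominator HMs HMf (fun k => phi (b k)).
apply: (almost_integral_mem HMs HMn HMic HMf d0) => m.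
have /OLspan [e [OMe Ecm]] : OL (c ^+ m)%:A.
  by rewrite (rmorphXn (in_alg L) m c : (c ^+ m)%:A = c%:A ^+ m); exact: subringX.
have -> : c ^+ m = \sum_k e k * phi (b k).
  rewrite -[c ^+ m]mulr1 -phi1 -phiZ Ecm (big_morph phi phiD phi0).
  by apply: eq_bigr => k _; rewrite phiZ.
rewrite mulr_sumr; apply: (subring_sum HMs) => k _; rewrite mulrCA.
exact: (subringM HMs (OMe k) (OMdphi k)).
Qed.

Lemma invertible_line_projective (J : M -> Prop) (A : L -> Prop) (w : L) :
  w != 0 -> is_ideal OM J -> invertible_ideal OM J ->
  (forall x, A x <-> exists2 c, J c & x = c *: w) -> fg_projective OM A.
Proof.
move=> w0 HJ [s dual_s sum_s] Aw.
have [phi [phiD phiZ phiw]] := exists_coordinate w0.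
have phiA x : A x -> J (phi x) /\ x = phi x *: w.
  by case/Aw=> c Jc ->; rewrite phiZ phiw mulr1.
pose u (k : 'I_(size s)) := (nth (0, 0) s k).1.
pose a (k : 'I_(size s)) := (nth (0, 0) s k).2.
have dual_k (k : 'I_(size s)) := dual_s _ (mem_nth (0, 0) (ltn_ord k)).
exists (size s), (fun x k => u k * phi x), (fun e => (\sum_k e k * a k) *: w).
split; [|split; [|split; [|split; [|split; [|split]]]]].
- by move=> x /phiA [Jx _] k; exact: (dual_k k).2.
- move=> e OMe; apply/Aw; exists (\sum_k e k * a k) => //.
  by apply: (ideal_sum HJ) => k _; exact: (idealM HJ (OMe k) (dual_k k).1).
- by move=> x y _ _; apply: functional_extensionality => k; rewrite phiD mulrDr.
- by move=> c x _ _; apply: functional_extensionality => k; rewrite phiZ mulrCA.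
- move=> e e' _ _; rewrite -scalerDl -big_split; congr (_ *: _).
  by apply: eq_bigr => k _; rewrite mulrDl.
- move=> c e _ _; rewrite scalerA mulr_sumr; congr (_ *: _).
  by apply: eq_bigr => k _; rewrite mulrA.
- move=> x /phiA [_ {2}->]; congr (_ *: _).
  rewrite -[RHS]mulr1 -sum_s (big_nth (0, 0)) big_mkord mulr_sumr.
  by apply: eq_bigr => k _; rewrite mulrAC mulrC.
Qed.

(* After clearing the denominators of the [g k] by [d], [A] is [J (v / d)] for the
   integral ideal [J] spanned by the [d * g k], which is invertible. *)
Lemma span_line_projective (A : L -> Prop) (v : L) n (g : 'I_n -> M) :
  v != 0 -> (exists2 x, A x & x != 0) ->
  (forall x, A x <-> exists2 e : 'I_n -> M,
     forall k, OM (e k) & x = (\sum_k e k * g k) *: v) ->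
  fg_projective OM A.
Proof.
have [HMs HMn HMic HMd] := HOM.
move=> v0 [x0 Ax0 x00] Aspan.
have [d [d0 OMd OMdg]] := common_denominator HMs HMf g.
pose w := d^-1 *: v.
have w0 : w != 0 by rewrite scaler_eq0 invr_eq0 negb_or d0.
have HJ := span_ideal_ideal HMs OMdg.
have Aw x : A x <-> exists2 c, span_ideal OM (fun k => d * g k) c & x = c *: w.
  have clear_d e : (\sum_k e k * g k) *: v = (\sum_k e k * (d * g k)) *: w.
    rewrite /w scalerA; congr (_ *: _); rewrite mulr_suml; apply: eq_bigr => k _.
    by rewrite mulrCA [RHS]mulrC mulKf.
  rewrite Aspan; split=> [[e OMe ->] | [_ [e OMe ->] ->]].
    by exists (\sum_k e k * (d * g k)); [exists e | exact: clear_d].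
  by exists e; rewrite ?clear_d.
apply: (invertible_line_projective w0 HJ _ Aw).
apply: (nonzero_ideal_invertible HMs HMn HMic HMf HMd HJ).
have /Aw [c Jc Ec] := Ax0; exists c; split=> //.
by apply: contraNneq x00; rewrite Ec => ->; rewrite scale0r.
Qed.

End OverADedekindDomain.

Section QuadraticExtension.
Variables (M : fieldType) (L : fieldExtType M) (sigma : {rmorphism L -> L}).
Hypothesis sigma_scalar : forall c : M, sigma c%:A = c%:A.
Hypothesis dimL : \dim {:L} = 2%N.

Definition atr x := x - sigma x.

Lemma sigmaZ c x : sigma (c *: x) = c *: sigma x.
Proof. by rewrite -mulr_algl rmorphM sigma_scalar mulr_algl. Qed.

Lemma atrD x y : atr (x + y) = atr x + atr y.
Proof. by rewrite /atr rmorphD opprD addrACA. Qed.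

Lemma atr_scalar c : atr c%:A = 0.
Proof. by rewrite /atr sigma_scalar subrr. Qed.

Lemma atr_sum n (e : 'I_n -> M) (w : 'I_n -> L) :
  atr (\sum_k e k *: w k) = \sum_k e k *: atr (w k).
Proof.
by rewrite /atr rmorph_sum -sumrB; apply: eq_bigr => k _; rewrite sigmaZ scalerBr.
Qed.

Section MovedElement.
Variable t : L.
Hypothesis moved_t : sigma t != t.

Lemma atr_moved_neq0 : atr t != 0.
Proof. by rewrite subr_eq0 eq_sym. Qed.

Lemma decompose_moved y : exists al be, y = al%:A + be *: t.
Proof.
have t_notin : t \notin <[1]>%VS.
  by apply: contra moved_t => /vlineP [c ->]; rewrite sigma_scalar.
have free_t1 : free [:: t; 1] by rewrite free_cons seq1_free oner_neq0 span_seq1 andbT.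
have span_t1 : <<[:: t; 1%R]>>%VS = fullv by apply/eqP; rewrite eqEdim subvf dimL (eqP free_t1).
move: (memvf y); rewrite -span_t1 span_cons span_seq1.
move=> /memv_addP [_ /vlineP [be ->] [_ /vlineP [al ->] ->]].
by exists al, be; rewrite addrC.
Qed.

Lemma atr_decomposed al be : atr (al%:A + be *: t) = be *: atr t.
Proof. by rewrite atrD atr_scalar add0r /atr sigmaZ scalerBr. Qed.

Lemma atr_colinear y : exists be, atr y = be *: atr t.
Proof. by have [al [be ->]] := decompose_moved y; exists be; exact: atr_decomposed. Qed.

Lemma fixed_scalar y : sigma y = y -> exists c, y = c%:A.
Proof.
move=> fixed_y; have [al [be Ey]] := decompose_moved y; exists al.
have : be *: atr t == 0 by rewrite -(atr_decomposed al) -Ey /atr fixed_y subrr.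
rewrite scaler_eq0 (negbTE atr_moved_neq0) orbF => /eqP be0.
by rewrite Ey be0 scale0r addr0.
Qed.

End MovedElement.

Variables (OM : M -> Prop) (OL : L -> Prop).
Hypothesis HOM : is_dedekind OM.
Hypothesis HMf : forall x, in_frac_field OM x.
Hypothesis HLs : is_subring OL.
Hypothesis HLf : forall x, in_frac_field OL x.
Hypothesis OM_OL : forall c, OM c -> OL c%:A.
Variables (n : nat) (b : 'I_n -> L).
Hypothesis OLb : forall k, OL (b k).
Hypothesis OLspan : forall x, OL x ->
  exists e : 'I_n -> M, (forall k, OM (e k)) /\ x = \sum_k e k *: b k.
Hypothesis sigma_nontrivial : exists x, sigma x != x.

Definition atr_image y := exists x, OL x /\ y = atr x.

Lemma moved_integer : exists2 t, OL t & sigma t != t.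
Proof.
have [x0 moved_x0] := sigma_nontrivial.
have [p [q [OLp [OLq [q0 Ex0]]]]] := HLf x0.
apply: NNPP => none; case/negP: moved_x0; apply/eqP.
have fixed z : OL z -> sigma z = z.
  by move=> OLz; apply: NNPP => nfixed; apply: none; exists z => //; apply/eqP.
by rewrite Ex0 rmorphM fmorphV !fixed.
Qed.

Lemma prod_mod_OL I y : (forall i, I i -> OM i) -> prod_mod I OL y -> OL y.
Proof.
move=> IOM [m [i [x [Ii [OLx ->]]]]]; apply: (subring_sum HLs) => k _.
by rewrite -mulr_algl; exact: (subringM HLs (OM_OL (IOM _ (Ii k))) (OLx k)).
Qed.

Lemma prod_mod_atr I z :
  prod_mod I atr_image z <-> exists2 y, prod_mod I OL y & z = atr y.
Proof.
split=> [[m [i [a [Ii [Aa ->]]]]] | [_ [m [i [x [Ii [OLx ->]]]]] ->]].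
  have /fin_all_exists [x Hx] := Aa.
  exists (\sum_k i k *: x k); first by exists m, i, x; split=> //; split=> // k; case: (Hx k).
  by rewrite atr_sum; apply: eq_bigr => k _; case: (Hx k) => _ ->.
exists m, i, (fun k => atr (x k)); rewrite atr_sum.
by split=> //; split=> // k; exists (x k).
Qed.

Lemma OM_add_IOL I : is_ideal OM I -> forall x,
  (exists a y, OM a /\ prod_mod I OL y /\ x = a%:A + y) <->
  (OL x /\ prod_mod I atr_image (atr x)).
Proof.
move=> HI x; have IOM := ideal_subring HI.
split=> [[a [y [OMa [Iy ->]]]] | [OLx /prod_mod_atr [y Iy Exy]]].
  split; first exact: (subringD HLs (OM_OL OMa) (prod_mod_OL IOM Iy)).
  by apply/prod_mod_atr; exists y; rewrite // atrD atr_scalar add0r.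
have [c Ec] : exists c, x - y = c%:A.
  have [t _ moved_t] := moved_integer; apply: (fixed_scalar moved_t).
  have : sigma (x - y) - (x - y) = atr y - atr x by rewrite /atr rmorphB; ring.
  by rewrite Exy subrr => /eqP; rewrite subr_eq0 => /eqP.
exists c, y; split; last by rewrite -Ec subrK.
apply: (scalar_mem_of_fg_module HOM HMf HLs OLspan); rewrite -Ec.
exact: (subringB HLs OLx (prod_mod_OL IOM Iy)).
Qed.

Lemma atr_image_projective : fg_projective OM atr_image.
Proof.
have [t OLt moved_t] := moved_integer.
have /fin_all_exists [be Hbe] : forall k, exists be, atr (b k) = be *: atr t.
  by move=> k; exact: atr_colinear.
have atr_span e : atr (\sum_k e k *: b k) = (\sum_k e k * be k) *: atr t.
  by rewrite atr_sum scaler_suml; apply: eq_bigr => k _; rewrite Hbe scalerA.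
apply: (span_line_projective HOM HMf (atr_moved_neq0 moved_t)).
  by exists (atr t); [exists t | exact: atr_moved_neq0].
move=> x; split=> [[y [OLy ->]] | [e OMe ->]].
  by have [e [OMe ->]] := OLspan OLy; exists e; rewrite ?atr_span.
exists (\sum_k e k *: b k); rewrite atr_span; split=> //.
by apply: (prod_mod_OL (I := OM)) => //; exists n, e, b.
Qed.

Lemma atr_image_rank_one : rank_one atr_image.
Proof.
have [t OLt moved_t] := moved_integer.
exists (atr t); split; first by exists t.
split; first exact: atr_moved_neq0.
by move=> _ [y [_ ->]]; exact: atr_colinear.
Qed.

End QuadraticExtension.

Theorem proposition3p8 (M : fieldType) (L : fieldExtType M)
  (OM : M -> Prop) (OL : L -> Prop) (sigma : {rmorphism L -> L}) :
  (* O_M, O_L Dedekind domains with fraction fields M, L *)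
  is_dedekind OM -> (forall x, in_frac_field OM x) ->
  is_dedekind OL -> (forall x, in_frac_field OL x) ->
  (* O_M ⊆ O_L, and O_L finitely generated as an O_M-module *)
  (forall c, OM c -> OL (c%:A)) ->
  (exists (n : nat) (b : 'I_n -> L), (forall k, OL (b k)) /\
     forall x, OL x -> exists c : 'I_n -> M, (forall k, OM (c k)) /\
                         x = \sum_(k < n) c k *: b k) ->
  (* [L : M] = 2 *)
  \dim {:L} = 2%N ->
  (* sigma is a nontrivial M-automorphism of L, so Gal(L/M) = <sigma> ≅ Z/2 *)
  (forall c : M, sigma (c%:A) = c%:A) ->
  (exists x, sigma x != x) ->
  let ATr := fun x : L => x - sigma x in
  let A := fun y : L => exists x, OL x /\ y = ATr x in
  (forall I : M -> Prop, is_ideal OM I -> (exists i, I i /\ i != 0) ->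
     forall x : L,
       (exists a y, OM a /\ prod_mod I OL y /\ x = a%:A + y)
       <-> (OL x /\ prod_mod I A (ATr x)))
  /\ (fg_projective OM A /\ rank_one A).
Proof.
move=> HOM HMf [HLs _ _ _] HLf OM_OL [n [b [OLb OLspan]]] dimL sigma_scalar moved ATr A.
split; first by move=> I HI _; exact: (OM_add_IOL sigma_scalar dimL HOM HMf HLs HLf OM_OL OLspan moved HI).
split; first exact: (atr_image_projective sigma_scalar dimL HOM HMf HLs HLf OM_OL OLb OLspan moved).
exact: (atr_image_rank_one sigma_scalar dimL HLf moved).
Qed.
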